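(* Let $p,a$ be positive integers with $\gcd(a,p)=1$, let $r\ge0$, $m\ge1$ and $1\le v\le p$ be integers. Let $b_{v,r,a,m}(n)$ denote the number of partitions of $n$ in which every multiplicity is congruent to $ja\pmod p$ for some $j\in\{0,1,\ldots,v-1\}$ and, for such $j$, lies between $j(pr+a)$ and $j(pr+a)+p(m-1)$ inclusive (equivalently, every multiplicity has the form $j(pr+a)+pk$ with $0\le j\le v-1$, $0\le k\le m-1$). Set $b_{v,r,a,m}(0)=1$ and $b_{v,r,a,m}(n)=0$ for $n<0$. If $\gcd(v,p)\nmid n$, then $$b_{v,r,a,m}(n)=\sum_{j=1}^{n}(-1)^{j+1}\Big(b_{v,r,a,m}\big(n-\tfrac{(pr+a)j(3j-1)}{2}\big)+b_{v,r,a,m}\big(n-\tfrac{(pr+a)j(3j+1)}{2}\big)\Big).$$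
   Context: Multiplicity of a part means the number of times it appears in the partition. *)

From mathcomp Require Import all_boot all_order all_algebra.
Set Implicit Arguments. Unset Strict Implicit. Unset Printing Implicit Defensive.
Import Order.TTheory GRing.Theory Num.Theory.

(* A partition of n is encoded by its multiplicity function:
   mu : {ffun 'I_n -> 'I_n.+1}, where mu i is the multiplicity of the part i+1
   (every part of a partition of n lies in 1..n and has multiplicity <= n). *)
Definition is_partition_mult (n : nat) (mu : {ffun 'I_n -> 'I_n.+1}) : bool :=
  \sum_(i < n) (i.+1 * mu i)%N == n.

Definition allowed_mult (p a r m v : nat) (c : nat) : bool :=
  [exists j : 'I_v, exists k : 'I_m, c == (j * (p * r + a) + p * k)%N].

(* b_{v,r,a,m}(n) for n >= 0.  A multiplicity 0 (part absent) is always
   allowed (j = k = 0), so the condition on all mu i is the condition on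
   multiplicities of parts that occur. *)
Definition b_nat (p a r m v n : nat) : nat :=
  #|[set mu : {ffun 'I_n -> 'I_n.+1} |
      is_partition_mult mu && [forall i, allowed_mult p a r m v (mu i)]]|.

Definition b (p a r m v : nat) (z : int) : int :=
  match z with
  | Posz k => (b_nat p a r m v k)%:Z
  | Negz _ => 0
  end.

From mathcomp Require Import all_boot all_order all_algebra.
From mathcomp Require Import zify ring.
Import Order.TTheory GRing.Theory Num.Theory.
Local Open Scope ring_scope.

(* Write c = p r + a.  Up to degree n, the generating function of b is the
   product over the parts t <= n of F(X^t), where
   F(x) = sum_(j < v, k < m) x^(j c + p k): a multiplicity j c + p k determines
   (j, k) because c is prime to p and v <= p.  Since
   F(x) (1 - x^c) = (1 - x^(c v)) sum_(k < m) x^(p k), multiplying that product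
   by prod_(t <= n) (1 - X^(c t)) only leaves exponents divisible by gcd(v, p),
   so its n-th coefficient vanishes when gcd(v, p) does not divide n.  By
   Shanks' finite form of Euler's pentagonal theorem, prod_(t <= n) (1 - q^t)
   agrees with the pentagonal series up to degree n, which gives the
   recurrence. *)

Section Shanks.
Context {R : comPzRingType} (q : R).

Definition qpoch (s n : nat) : R := \prod_(s <= i < n) (1 - q ^+ i.+1).

Definition shanks_term (n s : nat) : R :=
  (-1) ^+ s * q ^+ (s * n + 'C(s.+1, 2)) * qpoch s n.

Definition pentagonal_sum (n : nat) : R :=
  1 + \sum_(1 <= j < n.+1)
        (-1) ^+ j * (q ^+ (j * j + 'C(j.+1, 2)) + q ^+ (j * j + 'C(j, 2))).

Definition shanks_corr (n s : nat) : R :=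
  if s is s'.+1 then (-1) ^+ s * q ^+ (s * n.+1 + 'C(s, 2)) * qpoch s' n else 0.

Lemma qpochSr s n : (s <= n)%N -> qpoch s n.+1 = qpoch s n * (1 - q ^+ n.+1).
Proof. by move=> le_sn; rewrite /qpoch big_nat_recr. Qed.

Lemma qpochSl s n : (s < n)%N -> qpoch s n = (1 - q ^+ s.+1) * qpoch s.+1 n.
Proof. by move=> lt_sn; rewrite /qpoch big_ltn. Qed.

Lemma qpochnn n : qpoch n n = 1.
Proof. by rewrite /qpoch big_geq. Qed.

Lemma shanks_termS n s : (s <= n)%N ->
  shanks_term n.+1 s - shanks_term n s = shanks_corr n s.+1 - shanks_corr n s.
Proof.
move=> le_sn; rewrite /shanks_term /shanks_corr qpochSr //.
have binSs : 'C(s.+1, 2) = ('C(s, 2) + s)%N by rewrite binS bin1.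
set e := (s * n + 'C(s, 2))%N.
have -> : (s * n.+1 + 'C(s.+1, 2) = e + s + s)%N by rewrite binSs /e; lia.
have -> : (s * n + 'C(s.+1, 2) = e + s)%N by rewrite binSs /e; lia.
have -> : (s.+1 * n.+1 + 'C(s.+1, 2) = e + s + s + n.+1)%N by rewrite binSs /e; lia.
case: s le_sn @e binSs => [|s] le_sn e binSs.
  by rewrite /e !mul0n !add0n expr0 mul1r expr1; ring.
have -> : (s.+1 * n.+1 + 'C(s.+1, 2) = e + s.+1)%N by rewrite /e; lia.
rewrite (qpochSl _ _ le_sn) !exprD !exprS; ring.
Qed.

Lemma shanks_identity n :
  \sum_(0 <= s < n.+1) shanks_term n s = pentagonal_sum n.
Proof.
elim: n => [|n IH].
  by rewrite big_nat1 /pentagonal_sum big_geq // /shanks_term qpochnn; ring.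
have telescoped :
    \sum_(0 <= s < n.+1) (shanks_term n.+1 s - shanks_term n s) = shanks_corr n n.+1.
  rewrite (@telescope_sumr_eq _ _ _ (shanks_corr n)) ?subr0 // => s /andP[_ lt_sn].
  exact: shanks_termS.
rewrite big_nat_recr //= -(subrK (\sum_(0 <= s < n.+1) shanks_term n s)
  (\sum_(0 <= s < n.+1) shanks_term n.+1 s)) -sumrB telescoped IH.
rewrite /pentagonal_sum [in RHS]big_nat_recr //= /shanks_corr /shanks_term !qpochnn.
ring.
Qed.

End Shanks.

Section EqUpto.
Context {R : nzRingType} (K : nat).

Definition eq_upto (P Q : {poly R}) := forall i, (i <= K)%N -> P`_i = Q`_i.

Lemma eq_upto_refl P : eq_upto P P.
Proof. by []. Qed.

Lemma eq_uptoD P P' Q Q' : eq_upto P P' -> eq_upto Q Q' -> eq_upto (P + Q) (P' + Q').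
Proof. by move=> eqP eqQ i le_iK; rewrite !coefD eqP ?eqQ. Qed.

Lemma eq_uptoM P P' Q Q' : eq_upto P P' -> eq_upto Q Q' -> eq_upto (P * Q) (P' * Q').
Proof.
move=> eqP eqQ i le_iK; rewrite !coefM; apply: eq_bigr => j _.
rewrite eqP ?eqQ //; first exact: leq_trans (leq_subr _ _) le_iK.
by apply: leq_trans le_iK; rewrite -ltnS.
Qed.

Lemma eq_upto_sum0 (I : Type) (r : seq I) (S : pred I) (F : I -> {poly R}) :
  (forall i, S i -> eq_upto (F i) 0) -> eq_upto (\sum_(i <- r | S i) F i) 0.
Proof.
move=> F0; apply: (big_ind (eq_upto^~ 0)) => // P Q P0 Q0.
by rewrite -[0]addr0; exact: eq_uptoD.
Qed.

Lemma eq_upto_prod (I : Type) (r : seq I) (S : pred I) (F G : I -> {poly R}) :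
  (forall i, S i -> eq_upto (F i) (G i)) ->
  eq_upto (\prod_(i <- r | S i) F i) (\prod_(i <- r | S i) G i).
Proof. by move=> eqFG; apply: (big_ind2 eq_upto) => //; exact: eq_uptoM. Qed.

Lemma eq_upto_prod1 (I : Type) (r : seq I) (S : pred I) (F : I -> {poly R}) :
  (forall i, S i -> eq_upto (F i) 1) -> eq_upto (\prod_(i <- r | S i) F i) 1.
Proof.
move=> F1; apply: (big_ind (eq_upto^~ 1)) => // P Q P1 Q1.
by rewrite -[1]mulr1; exact: eq_uptoM.
Qed.

Lemma eq_upto_Xn0 e : (K < e)%N -> eq_upto 'X^e 0.
Proof. by move=> lt_Ke i le_iK; rewrite coefXn coef0; case: eqP => // ei; lia. Qed.

End EqUpto.

Arguments eq_uptoM {R K P P' Q Q'}.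

Section DvdSupport.
Context {R : nzRingType} (d : nat).

Definition dvd_supp (P : {poly R}) := forall i, ~~ (d %| i)%N -> P`_i = 0.

Lemma dvd_supp1 : dvd_supp 1.
Proof. by move=> i; rewrite coef1; case: eqP => // ->; rewrite dvdn0. Qed.

Lemma dvd_suppXn e : (d %| e)%N -> dvd_supp 'X^e.
Proof. by move=> dvd_de i; rewrite coefXn; case: eqP => // ->; rewrite dvd_de. Qed.

Lemma dvd_suppB P Q : dvd_supp P -> dvd_supp Q -> dvd_supp (P - Q).
Proof. by move=> suppP suppQ i ndvd_di; rewrite coefB suppP ?suppQ ?subr0. Qed.

Lemma dvd_suppM P Q : dvd_supp P -> dvd_supp Q -> dvd_supp (P * Q).
Proof.
move=> suppP suppQ i ndvd_di; rewrite coefM big1 // => j _.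
have [dvd_dj|/suppP->] := boolP (d %| j)%N; last by rewrite mul0r.
rewrite suppQ ?mulr0 //; apply: contra ndvd_di => dvd_d_ij.
by rewrite -(subnK (_ : j <= i)%N) ?dvdn_add // -ltnS.
Qed.

Lemma dvd_supp_sum (I : Type) (r : seq I) (S : pred I) (F : I -> {poly R}) :
  (forall i, S i -> dvd_supp (F i)) -> dvd_supp (\sum_(i <- r | S i) F i).
Proof.
move=> suppF; apply: big_ind => //; first by move=> i _; rewrite coef0.
by move=> P Q suppP suppQ i ndvd_di; rewrite coefD suppP ?suppQ ?addr0.
Qed.

Lemma dvd_supp_prod (I : Type) (r : seq I) (S : pred I) (F : I -> {poly R}) :
  (forall i, S i -> dvd_supp (F i)) -> dvd_supp (\prod_(i <- r | S i) F i).
Proof. by move=> suppF; apply: big_ind => //; [exact: dvd_supp1 | exact: dvd_suppM]. Qed.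

End DvdSupport.

Lemma eq_upto_pentagonal_qpoch (R : comNzRingType) (c n : nat) : (0 < c)%N ->
  eq_upto n (pentagonal_sum ('X^c : {poly R}) n) (qpoch 'X^c 0 n).
Proof.
move=> c_gt0; rewrite -shanks_identity big_ltn // -[qpoch _ _ _]addr0.
apply: eq_uptoD; first by rewrite /shanks_term mul0n add0n bin_small // expr0 !mul1r.
rewrite big_nat_cond; apply: eq_upto_sum0 => s /andP[/andP[s_gt0 _] _].
rewrite /shanks_term -exprM mulrAC mulrC -(mul0r ((-1) ^+ s * qpoch 'X^c s n)).
apply: eq_uptoM => //; apply: eq_upto_Xn0.
have : (s <= 'C(s.+1, 2))%N by rewrite binS bin1 leq_addl.
have : (s * n + 'C(s.+1, 2) <= c * (s * n + 'C(s.+1, 2)))%N by rewrite leq_pmull.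
have : (n <= s * n)%N by rewrite leq_pmull.
lia.
Qed.

Lemma coef_mul_pentagonal_sum (R : comNzRingType) (G : {poly R}) (c n : nat) :
  (G * pentagonal_sum 'X^c n)`_n =
  G`_n + \sum_(1 <= j < n.+1) (-1) ^+ j *
    ((G * 'X^(c * (j * j + 'C(j.+1, 2))))`_n + (G * 'X^(c * (j * j + 'C(j, 2))))`_n).
Proof.
rewrite /pentagonal_sum mulrDr mulr1 coefD mulr_sumr coef_sum; congr (_ + _).
apply: eq_bigr => j _; rewrite -!exprM mulrCA mulrDr.
rewrite -[(-1) ^+ j]signr_odd -[(-1) ^+ j : R]signr_odd !mulr_sign.
by case: (odd j); rewrite ?coefN coefD.
Qed.

Lemma coef_prod_allowed_mult (p a r m v k : nat) :
  (\prod_(i < k) \sum_(s : 'I_k.+1 | allowed_mult p a r m v s)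
     ('X^(i.+1 * s) : {poly int}))`_k = (b_nat p a r m v k)%:Z.
Proof.
rewrite bigA_distr_big coef_sum /b_nat -sum1_card -natz natr_sum.
rewrite big_mkcond [RHS]big_mkcond; apply: eq_bigr => f _.
rewrite prodrXr coefXn !inE /is_partition_mult eq_sym.
rewrite (_ : [forall x, _] = [forall i, allowed_mult p a r m v (f i)]) // andbC.
by case: [forall _, _] => //; case: eqP.
Qed.

Section Multiplicities.
Variables (p a r m v : nat).
Hypotheses (p_gt0 : (0 < p)%N) (coprime_ap : coprime a p) (le_vp : (v <= p)%N).
Local Notation c := (p * r + a)%N.

Lemma mult_repr_inj j1 j2 k1 k2 : (j1 < v)%N -> (j2 < v)%N ->
  (j1 * c + p * k1 = j2 * c + p * k2)%N -> j1 = j2 /\ k1 = k2.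
Proof.
have coprime_pc : coprime p c.
  by rewrite coprime_sym -coprime_modl mulnC modnMDl coprime_modl.
wlog le_j12 : j1 j2 k1 k2 / (j1 <= j2)%N.
  move=> W lt_j1v lt_j2v E; have [le_j12|/ltnW le_j21] := leqP j1 j2; first exact: W.
  by have [-> ->] := W j2 j1 k2 k1 le_j21 lt_j2v lt_j1v (esym E).
move=> _ lt_j2v E.
have : (p %| (j2 - j1) * c)%N.
  have := leq_mul le_j12 (leqnn c).
  by rewrite mulnBl (_ : _ - _ = p * (k1 - k2))%N ?dvdn_mulr // mulnBr; lia.
rewrite Gauss_dvdl // => dvd_p.
have ej : j1 = j2.
  have [?|lt0] := posnP (j2 - j1); first lia.
  by move: dvd_p; rewrite gtnNdvd //; lia.
subst j2; split=> //.
by move/eqP: E; rewrite eqn_add2l eqn_pmul2l // => /eqP.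
Qed.

Lemma sum_allowed_mult (V : nmodType) (f : nat -> V) (M : nat) :
  (v * c + p * m <= M)%N ->
  \sum_(j < v) \sum_(k < m) f (j * c + p * k)%N =
  \sum_(s < M | allowed_mult p a r m v s) f s.
Proof.
move=> le_M.
have lt_M (x : 'I_v * 'I_m) : (x.1 * c + p * x.2 < M)%N.
  apply: leq_trans le_M; rewrite -addnS leq_add //; last by rewrite ltn_mul2l p_gt0 /=.
  by rewrite leq_mul2r ltnW ?orbT.
pose h x := Ordinal (lt_M x).
have h_inj : {in [set: 'I_v * 'I_m] &, injective h}.
  move=> [j1 k1] [j2 k2] _ _ /(congr1 val) /mult_repr_inj[] // e1 e2.
  by congr pair; apply: val_inj.
rewrite pair_bigA /= -(eq_bigl _ _ (fun x => in_setT x)) /=.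
rewrite -(big_imset (fun s : 'I_M => f s) h_inj); apply: eq_bigl => s.
apply/imsetP/existsP => [[[j k] _ ->]|[j /existsP[k /eqP es]]].
  by exists j; apply/existsP; exists k.
by exists (j, k); rewrite ?inE //; apply: val_inj.
Qed.

Hypotheses (m_gt0 : (0 < m)%N) (v_gt0 : (0 < v)%N).

Definition mult_gf (t : nat) : {poly int} :=
  \sum_(j < v) \sum_(k < m) 'X^(t * (j * c + p * k)).

Lemma mult_gfE t M : (v * c + p * m <= M)%N ->
  mult_gf t = \sum_(0 <= s < M | allowed_mult p a r m v s) 'X^(t * s).
Proof.
by move=> le_M; rewrite big_mkord -(sum_allowed_mult _ (fun s => 'X^(t * s))).
Qed.

Lemma allowed_mult0 : allowed_mult p a r m v 0.
Proof.
apply/existsP; exists (Ordinal v_gt0); apply/existsP; exists (Ordinal m_gt0).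
by rewrite /= mul0n muln0.
Qed.

Lemma eq_upto_mult_gf t k : (0 < t)%N ->
  eq_upto k (mult_gf t) (\sum_(s < k.+1 | allowed_mult p a r m v s) 'X^(t * s)).
Proof.
move=> t_gt0; rewrite (mult_gfE t _ (leq_addr k.+1 _)).
rewrite (big_cat_nat (leq0n k.+1) (leq_addl _ _)) /=.
rewrite big_mkord -[X in eq_upto _ _ X]addr0; apply: eq_uptoD => //.
rewrite big_nat_cond; apply: eq_upto_sum0 => s /andP[/andP[lt_ks _] _].
by apply: eq_upto_Xn0; apply: leq_trans lt_ks (leq_pmull _ t_gt0).
Qed.

Lemma eq_upto_mult_gf1 t k : (k < t)%N -> eq_upto k (mult_gf t) 1.
Proof.
move=> lt_kt; rewrite (mult_gfE t _ (leq_addr 1 _)) big_ltn_cond ?addn1 //.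
rewrite allowed_mult0 muln0 -[X in eq_upto _ _ X]addr0; apply: eq_uptoD => //.
rewrite big_nat_cond; apply: eq_upto_sum0 => s /andP[/andP[s_gt0 _] _].
by apply: eq_upto_Xn0; apply: leq_trans lt_kt (leq_pmulr _ s_gt0).
Qed.

Definition part_gf (n : nat) : {poly int} := \prod_(0 <= i < n) mult_gf i.+1.

Lemma coef_part_gf n k : (k <= n)%N -> (part_gf n)`_k = (b_nat p a r m v k)%:Z.
Proof.
move=> le_kn; rewrite /part_gf (big_cat_nat (leq0n k) le_kn) /=.
have eq_head : eq_upto k (\prod_(0 <= i < k) mult_gf i.+1)
    (\prod_(0 <= i < k) \sum_(s < k.+1 | allowed_mult p a r m v s) 'X^(i.+1 * s)).
  by apply: eq_upto_prod => i _; exact: eq_upto_mult_gf.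
have eq_tail : eq_upto k (\prod_(k <= i < n) mult_gf i.+1) 1.
  rewrite big_nat_cond; apply: eq_upto_prod1 => i /andP[/andP[le_ki _] _].
  exact: eq_upto_mult_gf1.
by rewrite (eq_uptoM eq_head eq_tail) // mulr1 big_mkord coef_prod_allowed_mult.
Qed.

Lemma mult_gf_factor t :
  mult_gf t * (1 - 'X^c ^+ t) = (1 - 'X^(t * c * v)) * \sum_(k < m) 'X^(t * (p * k)).
Proof.
set Z : {poly int} := 'X^(t * c).
have -> : mult_gf t = (\sum_(j < v) Z ^+ j) * \sum_(k < m) 'X^(t * (p * k)).
  rewrite mulr_suml; apply: eq_bigr => j _; rewrite mulr_sumr; apply: eq_bigr => k _.
  by rewrite -!exprM -exprD; congr ('X ^+ _); lia.
have -> : 'X^c ^+ t = Z by rewrite -exprM mulnC.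
have -> : 1 - 'X^(t * c * v) = - (Z ^+ v - 1) by rewrite opprB exprM.
by rewrite subrX1; ring.
Qed.

Lemma dvd_supp_part_gf_qpoch n : dvd_supp (gcdn v p) (part_gf n * qpoch 'X^c 0 n).
Proof.
rewrite /part_gf /qpoch -big_split /=; apply: dvd_supp_prod => i _.
rewrite mult_gf_factor; apply: dvd_suppM.
  by apply: dvd_suppB; [exact: dvd_supp1 | apply: dvd_suppXn; rewrite dvdn_mull ?dvdn_gcdl].
by apply: dvd_supp_sum => k _; apply: dvd_suppXn; rewrite dvdn_mull ?dvdn_mulr ?dvdn_gcdr.
Qed.

Lemma b_subn_coef n e : b p a r m v (n%:Z - e%:Z) = (part_gf n * 'X^e)`_n.
Proof.
rewrite coefMXn; case: ltnP => [lt_ne|le_en].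
  have -> : n%:Z - e%:Z = Negz (e - n).-1.
    by rewrite NegzE prednK ?subn_gt0 // -subzn ?(ltnW lt_ne) // opprB.
  by [].
by rewrite subzn // /= coef_part_gf ?leq_subr.
Qed.

Lemma coef_part_gf_pentagonal n : (0 < c)%N -> ~~ (gcdn v p %| n)%N ->
  (part_gf n * pentagonal_sum 'X^c n)`_n = 0.
Proof.
move=> c_gt0 ndvd_n.
have := eq_uptoM (eq_upto_refl n (part_gf n)) (eq_upto_pentagonal_qpoch _ _ n c_gt0).
by move=> ->; rewrite ?dvd_supp_part_gf_qpoch.
Qed.

End Multiplicities.

Lemma half_pentagonal_minus c j :
  (c * (j * (3 * j - 1)) %/ 2 = c * (j * j + 'C(j, 2)))%N.
Proof.
have bin2j : (2 * 'C(j, 2) = j * j.-1)%N by rewrite -mul_bin_diag bin1.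
rewrite (_ : c * _ = 2 * (c * (j * j + 'C(j, 2))))%N ?mulKn // [RHS]mulnCA.
congr (c * _)%N; case: j bin2j => // j bin2j.
by rewrite (_ : 3 * j.+1 - 1 = (3 * j).+2)%N; lia.
Qed.

Lemma half_pentagonal_plus c j :
  (c * (j * (3 * j + 1)) %/ 2 = c * (j * j + 'C(j.+1, 2)))%N.
Proof.
have bin2j : (2 * 'C(j.+1, 2) = j.+1 * j)%N by rewrite -mul_bin_diag bin1.
rewrite (_ : c * _ = 2 * (c * (j * j + 'C(j.+1, 2))))%N ?mulKn // [RHS]mulnCA.
by congr (c * _)%N; lia.
Qed.

Theorem theorem4p1 (p a r m v n : nat)
  (hp : (0 < p)%N) (ha : (0 < a)%N) (hco : coprime a p)
  (hm : (1 <= m)%N) (hv1 : (1 <= v)%N) (hvp : (v <= p)%N)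
  (hn : ~~ (gcdn v p %| n)%N) :
  b p a r m v n%:Z =
  \sum_(1 <= j < n.+1)
     (-1) ^+ j.+1 *
     (b p a r m v (n%:Z - ((p * r + a) * (j * (3 * j - 1)) %/ 2)%N%:Z)
    + b p a r m v (n%:Z - ((p * r + a) * (j * (3 * j + 1)) %/ 2)%N%:Z)).
Proof.
have c_gt0 : (0 < p * r + a)%N by rewrite addn_gt0 ha orbT.
have := coef_part_gf_pentagonal p a r m v hp hco hvp hm hv1 n c_gt0 hn.
rewrite coef_mul_pentagonal_sum => /eqP; rewrite addr_eq0 => /eqP.
rewrite /= -(coef_part_gf p a r m v hp hco hvp hm hv1 n n (leqnn n)) => ->.
rewrite -sumrN; apply: eq_bigr => j _.
rewrite half_pentagonal_minus half_pentagonal_plus.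
by rewrite !(b_subn_coef p a r m v hp hco hvp hm hv1) exprS; ring.
Qed.
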